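(* Let $S$ be a right zero semigroup or a left zero semigroup, and let $\omega$ be a weight on $S$. Then the Beurling algebra $\ell^{1}(S,\omega)$ is biprojective.
   Context: A semigroup $S$ is a left zero semigroup if $st=s$ for all $s,t\in S$, and a right zero semigroup if $st=t$ for all $s,t\in S$. A weight on a (discrete) semigroup $S$ is a function $\omega:S\to(0,\infty)$ with $\omega(st)\le\omega(s)\omega(t)$ for all $s,t\in S$. The Beurling algebra $\ell^{1}(S,\omega)$ is the Banach space of functions $f=\sum_{s\in S}f(s)\delta_s$ with $\|f\|_\omega=\sum_{s\in S}|f(s)|\omega(s)<\infty$, with convolution product determined by $\delta_s*\delta_t=\delta_{st}$. A Banach algebra $\mathcal{A}$ is biprojective if there is a bounded $\mathcal{A}$-bimodule homomorphism $\rho:\mathcal{A}\to\mathcal{A}\hat{\otimes}\mathcal{A}$ with $\pi\circ\rho=I_{\mathcal{A}}$, where $\pi:\mathcal{A}\hat{\otimes}\mathcal{A}\to\mathcal{A}$, $\pi(a\otimes b)=ab$, is the multiplication map and $\hat{\otimes}$ is the projective tensor product. *)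

From HB Require Import structures.
From mathcomp Require Import all_boot all_order all_algebra.
From mathcomp Require Import finmap complex.
From mathcomp Require Import all_classical all_reals all_analysis.
Import Order.TTheory GRing.Theory Num.Theory numFieldNormedType.Exports.

Set Implicit Arguments.
Unset Strict Implicit.
Unset Printing Implicit Defensive.

Local Open Scope classical_set_scope.
Local Open Scope ring_scope.
Local Open Scope complex_scope.

(* Unordered (net) sums over an arbitrary index type: the limit of the finite *)
(* partial sums along the filter of finite subsets ordered by inclusion.      *)

Definition totally {I : choiceType} : set_system {fset I} :=
  filter_from setT (fun A => [set B | fsubset A B]).

Instance totally_filter {I : choiceType} : ProperFilter (@totally I).
Proof.
eapply filter_from_proper; last by move=> A _; exists A; rewrite /= fsubset_refl.
apply: filter_fromT_filter; first by exists fset0.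
by move=> A B /=; exists (A `|` B)%fset => P /=; rewrite fsubUset => /andP[].
Qed.

Definition cplx (R : realType) : numClosedFieldType := (R[i] : numClosedFieldType).

Definition partial_sum {I : choiceType} {R : realType}
  (x : I -> cplx R) (A : {fset I}) : cplx R := \sum_(i <- A) x i.

(* sum of a family of complex numbers (meaningful for absolutely summable   *)
(* families, which is the only case in which it is used below)              *)
Definition csum {I : choiceType} {R : realType} (x : I -> cplx R) : cplx R :=
  lim (partial_sum x @ totally).

Definition cabs {R : realType} (z : cplx R) : R :=
  Num.sqrt (complex.Re z ^+ 2 + complex.Im z ^+ 2).

Definition left_zero_semigroup {S : Type} (op : S -> S -> S) :=
  forall s t, op s t = s.
Definition right_zero_semigroup {S : Type} (op : S -> S -> S) :=
  forall s t, op s t = t.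

Definition is_weight {R : realType} {S : Type} (op : S -> S -> S) (w : S -> R) :=
  (forall s, 0 < w s) /\ (forall s t, w (op s t) <= w s * w t).

Definition l1norm {R : realType} {T : choiceType} (w : T -> R)
  (f : T -> cplx R) : \bar R :=
  (\esum_(s in [set: T]) (cabs (f s) * w s)%:E)%E.

Definition in_l1 {R : realType} {T : choiceType} (w : T -> R)
  (f : T -> cplx R) : Prop := (l1norm w f < +oo)%E.

(* convolution product on l^1(S, w): delta_s * delta_t = delta_(st) *)
Definition conv {R : realType} {S : choiceType} (op : S -> S -> S)
  (f g : S -> cplx R) : S -> cplx R :=
  fun u => csum (fun p : S * S => if op p.1 p.2 == u then f p.1 * g p.2 else 0).

(* The projective tensor product l^1(S,w) ^(x) l^1(S,w), realised as          *)
(* l^1(S x S, w x w) via the canonical isometric isomorphism                  *)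
(* delta_s (x) delta_t <-> delta_(s,t), with its bimodule actions             *)
(*   a . (b (x) c) = (a * b) (x) c,    (b (x) c) . a = b (x) (c * a),          *)
(* and the multiplication map pi (b (x) c) = b * c.                          *)

Definition tweight {R : realType} {S : Type} (w : S -> R) : S * S -> R :=
  fun p => w p.1 * w p.2.

Definition lact {R : realType} {S : choiceType} (op : S -> S -> S)
  (a : S -> cplx R) (F : S * S -> cplx R) : S * S -> cplx R :=
  fun uv => csum (fun p : S * S =>
    if op p.1 p.2 == uv.1 then a p.1 * F (p.2, uv.2) else 0).

Definition ract {R : realType} {S : choiceType} (op : S -> S -> S)
  (F : S * S -> cplx R) (a : S -> cplx R) : S * S -> cplx R :=
  fun uv => csum (fun p : S * S =>
    if op p.1 p.2 == uv.2 then F (uv.1, p.1) * a p.2 else 0).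

Definition tmult {R : realType} {S : choiceType} (op : S -> S -> S)
  (F : S * S -> cplx R) : S -> cplx R :=
  fun u => csum (fun p : S * S => if op p.1 p.2 == u then F p else 0).

Definition beurling_biprojective {R : realType} {S : choiceType}
  (op : S -> S -> S) (w : S -> R) : Prop :=
  exists rho : (S -> cplx R) -> (S * S -> cplx R),
    [/\
        forall f, in_l1 w f -> in_l1 (tweight w) (rho f),
        forall (c : cplx R) f g, in_l1 w f -> in_l1 w g ->
          rho (fun s => c * f s + g s) = (fun p => c * rho f p + rho g p),
        exists M : R, forall f, in_l1 w f ->
          (l1norm (tweight w) (rho f) <= M%:E * l1norm w f)%E,
        forall a f, in_l1 w a -> in_l1 w f ->
          rho (conv op a f) = lact op a (rho f) /\
          rho (conv op f a) = ract op (rho f) a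
      &
        forall f, in_l1 w f -> tmult op (rho f) = f].

From Pilot Require Import Defs.
From HB Require Import structures.
From mathcomp Require Import all_boot all_order all_algebra.
From mathcomp Require Import finmap complex.
From mathcomp Require Import all_classical all_reals all_analysis unstable.
Import Order.TTheory GRing.Theory Num.Theory numFieldNormedType.Exports.

Set Implicit Arguments.
Unset Strict Implicit.
Unset Printing Implicit Defensive.

Local Open Scope classical_set_scope.
Local Open Scope ring_scope.

(* In a right zero semigroup [s t = t], so for any [s0] the map
   [rho f = delta_s0 (x) f] satisfies [pi (rho f) = f] and
   [||rho f|| <= w s0 * ||f||].  It commutes with the right action, which only
   touches the second factor, and with the left action, since
   [a . (delta_s0 (x) f)] and [delta_s0 (x) (a * f)] both collapse to
   [(sum a) (delta_s0 (x) f)].  A left zero semigroup is right zero for the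
   opposite product, and transposing the tensor factors carries biprojectivity
   over from the opposite semigroup.  No summability is ever needed: each
   identity between unordered sums is a reindexing by a bijection. *)

Section Csum.
Context {I : choiceType} {R : realType}.
Implicit Types x : I -> cplx R.

Lemma csum_single x a : (forall i, i != a -> x i = 0) -> csum x = x a.
Proof.
move=> x0; rewrite /csum; apply: norm_lim_near_cst.
exists [fset a]%fset => // B /= sub.
have aB : a \in B by apply: (fsubsetP sub); rewrite inE.
by rewrite /partial_sum (bigD1_seq a) //= big1 ?addr0 // => i /x0.
Qed.

Lemma csum0 x : (forall i, x i = 0) -> csum x = 0.
Proof.
move=> x0; rewrite /csum; apply: norm_lim_near_cst.
by exists fset0 => // B _; rewrite /partial_sum big1.
Qed.

Lemma csum_reindex x (e e' : I -> I) :
  cancel e e' -> cancel e' e -> csum (x \o e) = csum x.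
Proof.
move=> eK e'K; rewrite /csum.
pose im (A : {fset I}) := (e @` A)%fset.
have im_inv A : im [fset e' a | a in A]%fset = A.
  apply/fsetP => a; apply/imfsetP/idP => [[_ /imfsetP[b bA ->] ->]|aA] /=.
    by rewrite e'K.
  by exists (e' a); [apply/imfsetP; exists a | rewrite e'K].
have -> : partial_sum (x \o e) = partial_sum x \o im.
  apply/funext => A; rewrite /= /partial_sum big_imfset //=.
  by move=> i j _ _; exact: (can_inj eK).
change (lim (partial_sum x @ (im @ totally)) = lim (partial_sum x @ totally)).
have -> : im @ totally = totally.
  apply/funext => P; apply/propext; split=> -[B _ BP].
  - exists (im B) => // C /= BC; rewrite -(im_inv C); apply: BP => /=.
    apply/fsubsetP => b bB; apply/imfsetP; exists (e b); last by rewrite eK.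
    by apply: (fsubsetP BC); apply/imfsetP; exists b.
  - exists [fset e' b | b in B]%fset => // C /= BC; apply: BP => /=.
    apply/fsubsetP => b bB; apply/imfsetP; exists (e' b); last by rewrite e'K.
    by apply: (fsubsetP BC); apply/imfsetP; exists b.
by [].
Qed.

End Csum.

Definition transp {T : eqType} (c d x : T) : T :=
  if x == c then d else if x == d then c else x.

Lemma transpK {T : eqType} (c d : T) : involutive (transp c d).
Proof.
move=> x; rewrite /transp; case: (eqVneq x c) => [->|xc].
  by rewrite eqxx; case: eqVneq.
by case: (eqVneq x d) => [->|xd]; rewrite ?eqxx ?(negPf xc) ?(negPf xd).
Qed.

Lemma transp_eql {T : eqType} (c d x : T) : (transp c d x == c) = (x == d).
Proof.
rewrite /transp; case: (eqVneq x c) => [->|xc]; first by rewrite eq_sym.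
by case: (eqVneq x d) => [xd|xd]; rewrite ?xd ?eqxx ?(negPf xc).
Qed.

Lemma csum_fiber_snd {I J : choiceType} {R : realType} (g : I -> cplx R) (c d : J) :
  csum (fun p : I * J => if p.2 == c then g p.1 else 0) =
  csum (fun p : I * J => if p.2 == d then g p.1 else 0).
Proof.
pose e (p : I * J) := (p.1, transp c d p.2).
have eK : involutive e by move=> [i j]; rewrite /e /= transpK.
rewrite -(csum_reindex _ eK eK); congr csum; apply/funext => p.
by rewrite /= transp_eql.
Qed.

Section WeightedNorm.
Context {R : realType} {T : choiceType}.

Lemma cabs0 : cabs (0 : cplx R) = 0.
Proof. by rewrite /cabs /= expr0n /= addr0 sqrtr0. Qed.

Lemma cabs_ge0 (z : cplx R) : 0 <= cabs z.
Proof. exact: sqrtr_ge0. Qed.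

Lemma l1norm0 (w : T -> R) : l1norm w (fun=> 0) = 0%E.
Proof. by rewrite /l1norm esum1 // => s _; rewrite cabs0 mul0r. Qed.

Lemma esumZl_le (c : R) (g : T -> R) : 0 <= c -> (forall t, 0 <= g t) ->
  (\esum_(t in [set: T]) (c * g t)%:E <= c%:E * \esum_(t in [set: T]) (g t)%:E)%E.
Proof.
move=> c0 g0; apply: ge_ereal_sup => _ [X [finX _] <-] /=.
under eq_fsbigr do rewrite EFinM.
rewrite -ge0_mule_fsumr; last by move=> i; rewrite lee_fin.
apply: lee_wpmul2l; first by rewrite lee_fin.
by apply: ereal_sup_ubound; exists X.
Qed.

Lemma l1norm_swap (w : T -> R) (F : T * T -> cplx R) :
  l1norm (tweight w) (F \o swap) = l1norm (tweight w) F.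
Proof.
rewrite /l1norm (reindex_esum setT setT swap); last first.
  by rewrite setTT_bijective; exists swap; exact: swapK.
by apply: eq_esum => -[s t] _; rewrite /tweight /swap /= [w t * _]mulrC.
Qed.

End WeightedNorm.

Section RightZero.
Context {R : realType} {S : choiceType} (op : S -> S -> S).
Hypothesis op_rz : right_zero_semigroup op.

Definition delta_tensor (s0 : S) (f : S -> cplx R) : S * S -> cplx R :=
  fun p => if p.1 == s0 then f p.2 else 0.

Lemma l1norm_delta_tensor_le (w : S -> R) s0 f : (forall s, 0 <= w s) ->
  (l1norm (tweight w) (delta_tensor s0 f) <= (w s0)%:E * l1norm w f)%E.
Proof.
move=> w0; have tw0 p : 0 <= tweight w p by rewrite mulr_ge0.
rewrite /l1norm (esumID (range (pair s0))); last first.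
  by move=> p _; rewrite lee_fin mulr_ge0 ?cabs_ge0.
rewrite [X in (_ + X)%E]esum1 ?adde0; last first.
  move=> [s t] [_ /= st]; rewrite /delta_tensor /=; case: eqP => [e|_].
    by case: st; exists t; rewrite ?e.
  by rewrite cabs0 mul0r.
rewrite setTI esum_image; last by move=> s t _ _ [].
under eq_esum do rewrite /delta_tensor /tweight /= eqxx mulrCA.
by apply: esumZl_le => // t; rewrite mulr_ge0 ?cabs_ge0.
Qed.

Lemma tmult_delta_tensor s0 f : tmult op (delta_tensor s0 f) = f.
Proof.
apply/funext => u; rewrite /tmult (csum_single (a := (s0, u))) /delta_tensor.
  by rewrite /= op_rz !eqxx.
move=> [s t] /=; rewrite op_rz; case: (eqVneq t u) => // ->.
by case: (eqVneq s s0) => // ->; rewrite eqxx.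
Qed.

Lemma lact_delta_tensor s0 a f :
  lact op a (delta_tensor s0 f) = delta_tensor s0 (Defs.conv op a f).
Proof.
apply/funext => -[u v]; rewrite /lact /Defs.conv /delta_tensor /=.
case: (eqVneq u s0) => [->|us0]; last first.
  apply: csum0 => -[s t]; rewrite op_rz /=.
  by case: eqP => // ->; rewrite (negPf us0) mulr0.
have fiberE c g : (fun p : S * S => if op p.1 p.2 == c then a p.1 * g p.2 else 0)
    = (fun p => if p.2 == c then a p.1 * g c else 0).
  by apply/funext => -[s t]; rewrite op_rz /=; case: eqVneq => // ->.
by rewrite (fiberE s0 (fun t => if t == s0 then f v else 0)) fiberE /= eqxx
  (csum_fiber_snd (fun s => a s * f v) s0 v).
Qed.

Lemma ract_delta_tensor s0 a f :
  ract op (delta_tensor s0 f) a = delta_tensor s0 (Defs.conv op f a).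
Proof.
apply/funext => -[u v]; rewrite /ract /Defs.conv /delta_tensor /=.
case: (eqVneq u s0) => // _.
by apply: csum0 => p; case: ifP; rewrite ?mul0r.
Qed.

End RightZero.

Lemma beurling_biprojective_void {R : realType} {S : choiceType}
    (op : S -> S -> S) (w : S -> R) :
  ~ inhabited S -> beurling_biprojective op w.
Proof.
move=> S0; have nS (s : S) : False := S0 (inhabits s).
exists (fun _ _ => 0); split.
- by move=> f _; rewrite /in_l1 l1norm0 ltry.
- by move=> c f g _ _; apply/funext => p; case: (nS p.1).
- by exists 0 => f _; rewrite l1norm0 mul0e.
- by move=> a f _ _; split; apply/funext => p; case: (nS p.1).
- by move=> f _; apply/funext => s; case: (nS s).
Qed.

Lemma right_zero_biprojective {R : realType} {S : choiceType}
    (op : S -> S -> S) (w : S -> R) :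
  right_zero_semigroup op -> (forall s, 0 <= w s) -> beurling_biprojective op w.
Proof.
move=> op_rz w0; have [[s0]|S0] := pselect (inhabited S); last first.
  exact: beurling_biprojective_void.
exists (delta_tensor s0); split.
- move=> f f_l1; apply: le_lt_trans (l1norm_delta_tensor_le s0 f w0) _.
  by apply: lte_mul_pinfty; rewrite ?lee_fin.
- move=> c f g _ _; apply/funext => p; rewrite /delta_tensor.
  by case: ifP; rewrite ?mulr0 ?addr0.
- by exists (w s0) => f _; apply: l1norm_delta_tensor_le.
- by move=> a f _ _; rewrite lact_delta_tensor ?ract_delta_tensor.
- by move=> f _; apply: tmult_delta_tensor.
Qed.

Section Opposite.
Context {R : realType} {S : choiceType} (op : S -> S -> S).
Local Notation op_opp := (fun s t : S => op t s).
Implicit Types (f g a : S -> cplx R) (F : S * S -> cplx R).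

Lemma conv_opp f g : Defs.conv op_opp f g = Defs.conv op g f.
Proof.
apply/funext => u; rewrite /Defs.conv -[RHS](csum_reindex _ swapK swapK).
by congr csum; apply/funext => -[s t]; rewrite /= mulrC.
Qed.

Lemma lact_swap a F : lact op a (F \o swap) = ract op_opp F a \o swap.
Proof.
apply/funext => -[u v]; rewrite /lact /ract /= -[RHS](csum_reindex _ swapK swapK).
by congr csum; apply/funext => -[s t]; rewrite /= mulrC.
Qed.

Lemma ract_swap a F : ract op (F \o swap) a = lact op_opp a F \o swap.
Proof.
apply/funext => -[u v]; rewrite /lact /ract /= -[RHS](csum_reindex _ swapK swapK).
by congr csum; apply/funext => -[s t]; rewrite /= mulrC.
Qed.

Lemma tmult_swap F : tmult op (F \o swap) = tmult op_opp F.
Proof.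
apply/funext => u; rewrite /tmult -[RHS](csum_reindex _ swapK swapK).
by congr csum; apply/funext => -[s t].
Qed.

Lemma beurling_biprojective_opp (w : S -> R) :
  beurling_biprojective op_opp w -> beurling_biprojective op w.
Proof.
move=> [rho [rho_l1 rho_lin [M rho_bound] rho_bimod rho_sect]].
exists (fun f => rho f \o swap); split.
- by move=> f /rho_l1; rewrite /in_l1 l1norm_swap.
- by move=> c f g fl gl; rewrite /= rho_lin.
- by exists M => f /rho_bound; rewrite l1norm_swap.
- move=> a f al fl; have [rho_l rho_r] := rho_bimod a f al fl.
  by rewrite /= -!conv_opp rho_l rho_r lact_swap ract_swap.
- by move=> f /rho_sect; rewrite tmult_swap.
Qed.

End Opposite.

Theorem proposition2p1 (R : realType) (S : choiceType) (op : S -> S -> S)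
  (w : S -> R) :
  (right_zero_semigroup op \/ left_zero_semigroup op) ->
  is_weight op w ->
  beurling_biprojective op w.
Proof.
move=> op_zero [w_gt0 _]; have w_ge0 s : 0 <= w s := ltW (w_gt0 s).
case: op_zero => [op_rz|op_lz].
- exact: right_zero_biprojective.
- by apply: beurling_biprojective_opp; apply: right_zero_biprojective.
Qed.
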